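(* Let $h_{m,n}(x)=S_{(n^m)}(x,\tfrac16,0,0,\ldots)$ for integers $m,n\ge0$. Then for all $m,n\ge0$, $$\big(D_x^2-3xD_x+3m\big)h_{m,n+1}\cdot h_{m,n}=0,\quad \big(D_x^2-3xD_x+3(m-n)\big)h_{m,n+1}\cdot h_{m+1,n}=0,\quad \big(D_x^2-3xD_x-3n\big)h_{m,n}\cdot h_{m+1,n}=0.$$
   Context: $(n^m)$ is the rectangular partition with $m$ parts equal to $n$. Schur functions: $S_\lambda(t)=\det(p_{\lambda_i-i+j}(t))_{1\le i,j\le l(\lambda)}$ with $\sum_{n\ge0}p_n(t)z^n=\exp(\sum_{k\ge1}t_kz^k)$, $p_n=0$ for $n<0$, $S_\emptyset=1$. Hirota operators: $D_xF\cdot G=F'G-FG'$, $D_x^2F\cdot G=F''G-2F'G'+FG''$. *)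

From mathcomp Require Import all_boot all_order all_algebra.
Set Implicit Arguments. Unset Strict Implicit. Unset Printing Implicit Defensive.
Import GRing.Theory Num.Theory.
Local Open Scope ring_scope.

(* p_n(t) at t = (x, 1/6, 0, 0, ...): the coefficient of z^n in
   exp(x z + z^2/6) = exp(x z) * exp(z^2/6), i.e.
   p_n = sum_{k <= n/2} (1/6)^k / k! * x^(n-2k) / (n-2k)!  *)
Definition pS (n : nat) : {poly rat} :=
  \sum_(k < n./2.+1)
     ((6 ^ k * k`! * (n - 2 * k)`!)%:R)^-1 *: 'X^(n - 2 * k).

Definition pZ (k : int) : {poly rat} :=
  match k with Posz n => pS n | Negz _ => 0 end.

(* Schur function of the rectangular partition (n^m) at t = (x,1/6,0,...):
   det (p_{lambda_i - i + j})_{1 <= i,j <= m} with lambda_i = n.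
   (For n = 0 the matrix is unitriangular so the value is 1 = S_emptyset;
    for m = 0 the empty determinant is 1.) *)
Definition h (m n : nat) : {poly rat} :=
  \det (\matrix_(i < m, j < m) pZ (n%:Z - i%:Z + j%:Z)).

Definition Dx (F G : {poly rat}) : {poly rat} := F^`() * G - F * G^`().
Definition Dx2 (F G : {poly rat}) : {poly rat} :=
  F^`(2) * G - 2%:R * (F^`() * G^`()) + F * G^`(2).

Definition hirota (c : int) (F G : {poly rat}) : {poly rat} :=
  Dx2 F G - 3%:R * ('X * Dx F G) + c%:~R *: (F * G).

From mathcomp Require Import all_boot all_algebra all_fingroup.
From mathcomp Require Import zify ring.
Set Implicit Arguments. Unset Strict Implicit. Unset Printing Implicit Defensive.
Import GRing.Theory Num.Theory.
Local Open Scope ring_scope.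

(* With p_k the coefficient of z^k in exp(xz + z^2/6), one has p_k' = p_(k-1)
   and 3k p_k = 3x p_(k-1) + p_(k-2).  For determinants det(p_(c_j - r_i)),
   differentiation is therefore the sum over i of raising r_i by one, and the
   sum over i of raising r_i by two is a multiple of the determinant minus 3x
   times its derivative.  Take F = det_N(p_(c_j - i)) and let G be F bordered by
   a column of shift d.  These rules express F'' and G'' through determinants
   with one or two raised rows, and the Hirota expression becomes twice a
   three-term Plucker relation between maximal minors of one bordered matrix,
   plus a multiple of F G whose coefficient cancels.  The three identities are
   this statement for suitable c and d. *)

Lemma deriv_eq0_coef0 (R : numDomainType) (p : {poly R}) :
  p^`() = 0 -> p`_0 = 0 -> p = 0.
Proof.
move=> dp0 p0; apply/polyP => -[|i]; rewrite coef0 //.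
have /eqP := congr1 (fun q : {poly R} => q`_i) dp0.
by rewrite coef_deriv coef0 mulrn_eq0 => /eqP.
Qed.

Section RowSubstitution.
Variable R : comNzRingType.

Definition row_subst n (A B : 'M[R]_n) (i : 'I_n) : 'M[R]_n :=
  \matrix_(k, j) (if k == i then B else A) k j.

Lemma det_row_subst_lin n (A B C : 'M[R]_n) (i : 'I_n) (b c : R) :
  \det (row_subst A (b *: B + c *: C) i) =
  b * \det (row_subst A B i) + c * \det (row_subst A C i).
Proof.
apply: (determinant_multilinear (i0 := i)); first by apply/rowP => j; rewrite !mxE eqxx !mxE.
all: by apply/matrixP => k j; rewrite !mxE eq_sym (negbTE (neq_lift i k)).
Qed.

Lemma sum_det_row_scale n (A : 'M[R]_n) (a b : 'I_n -> R) :
  \sum_i \det (row_subst A (\matrix_(k, j) ((a j + b k) * A k j)) i) =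
  (\sum_j a j + \sum_k b k) * \det A.
Proof.
rewrite /determinant exchange_big big_distrr /=; apply: eq_bigr => s _.
rewrite -big_distrr /= mulrCA; congr (_ * _).
transitivity (\sum_i (a (s i) + b i) * \prod_k A k (s k)).
  apply: eq_bigr => i _.
  rewrite (bigD1 i) //= [in RHS](bigD1 i) //= !mxE eqxx !mxE -mulrA; congr (_ * (_ * _)).
  by apply: eq_bigr => k /negbTE ki; rewrite !mxE ki.
by rewrite -big_distrl big_split /= [in RHS](reindex_inj (@perm_inj _ s)).
Qed.

Lemma expand_det_unit_col n (A : 'M[R]_n) (j0 p : 'I_n) :
  (forall i, A i j0 = (i == p)%:R) ->
  \det A = (-1) ^+ (p + j0) * \det (row' p (col' j0 A)).
Proof.
move=> Aj0; rewrite (expand_det_col _ j0) (bigD1 p) //= big1 ?addr0 => [|i /negbTE ip].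
  by rewrite Aj0 eqxx mul1r.
by rewrite Aj0 ip mul0r.
Qed.

End RowSubstitution.

Section DerivDet.
Variable R : comNzRingType.

Lemma deriv_prod (I : eqType) (r : seq I) (F : I -> {poly R}) : uniq r ->
  (\prod_(i <- r) F i)^`() =
  \sum_(i <- r) \prod_(j <- r) (if j == i then (F j)^`() else F j).
Proof.
elim: r => [|a r IH] /=; first by rewrite !big_nil -polyC1 derivC.
move=> /andP [a_r uniq_r].
have neq_a j : j \in r -> (j == a) = false by apply: contraTF => /eqP ->.
rewrite big_cons derivM IH // !big_cons eqxx big_distrr /=; congr (_ + _).
  by congr (_ * _); rewrite !big_seq; apply: eq_bigr => j /neq_a ->.
rewrite !big_seq; apply: eq_bigr => i /neq_a ia.
by rewrite big_cons eq_sym ia.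
Qed.

Lemma deriv_det n (A : 'M[{poly R}]_n) :
  (\det A)^`() = \sum_i \det (row_subst A (map_mx deriv A) i).
Proof.
rewrite /determinant raddf_sum exchange_big /=; apply: eq_bigr => s _.
have dsign : ((-1) ^+ s : {poly R})^`() = 0.
  by rewrite -signr_odd; case: odd; rewrite ?expr1 ?expr0 ?derivN -polyC1 derivC ?oppr0.
rewrite derivM dsign mul0r add0r -big_distrr /= deriv_prod ?index_enum_uniq //.
congr (_ * _); apply: eq_bigr => i _; apply: eq_bigr => k _.
by rewrite !mxE; case: eqP; rewrite ?mxE.
Qed.

End DerivDet.

Section Plucker.
Variables (R : idomainType) (k : nat) (M : nat -> nat -> R).

Definition bordered (u v : nat -> R) : 'M[R]_k.+2 :=
  \matrix_(i, j) if j == 0%N :> nat then u i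
                 else if j == 1%N :> nat then v i else M i (j - 2)%N.

Definition bdet u v := \det (bordered u v).

Definition pairing (l w : nat -> R) := \sum_(r < k.+2) l r * w r.

Let col1 : 'I_k.+2 := Ordinal (isT : 1 < k.+2)%N.

Lemma bdet_expand u v :
  bdet u v = pairing (fun r => cofactor (bordered u (fun=> 0)) (inord r) col1) v.
Proof.
rewrite /bdet /pairing (expand_det_col _ col1); apply: eq_bigr => i _.
rewrite inord_val mxE mulrC /cofactor; congr (_ * \det _ * _).
apply/matrixP => a b; rewrite !mxE /=.
by case: ifP => // _; case: ifP => // /eqP; rewrite /bump; case: leqP => /=; lia.
Qed.

Lemma bdet_xx u : bdet u u = 0.
Proof.
rewrite /bdet -det_tr; apply: (determinant_alternate (i1 := ord0) (i2 := col1)) => // j.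
by rewrite !mxE.
Qed.

Lemma bdet_col u j : (j < k)%N -> bdet u (M^~ j) = 0.
Proof.
move=> jk; rewrite /bdet -det_tr.
apply: (determinant_alternate (i1 := col1) (i2 := Ordinal (jk : j.+2 < k.+2)%N)) => // i.
by rewrite !mxE /= !subSS subn0.
Qed.

Lemma bdetC u v : bdet u v = - bdet v u.
Proof.
rewrite /bdet; have -> : bordered u v = xcol ord0 col1 (bordered v u).
  apply/matrixP => i j; rewrite !mxE.
  case: tpermP => [->|->|/eqP + /eqP] //=.
  by rewrite -!(inj_eq val_inj) /= => /negbTE-> /negbTE->.
by rewrite xcolE det_mulmx det_perm odd_tperm /= expr1 mulrN1.
Qed.

Lemma bdet_kernel (l x y d : nat -> R) :
  pairing l x = 0 -> pairing l y = 0 -> (forall j, (j < k)%N -> pairing l (M^~ j) = 0) ->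
  pairing l d * bdet x y = 0.
Proof.
(* Z has first row the values of [pairing l] on its columns d, x, y, M; this row
   is the l-combination of the others, so det Z = 0, while Laplace expansion
   along it leaves only the entry [pairing l d] times [bdet x y]. *)
move=> lx ly lM.
pose col j r := if j == 0%N then d r else if j == 1%N then x r
                else if j == 2%N then y r else M r (j - 3)%N.
pose Z : 'M[R]_k.+3 :=
  \matrix_(i, j) if i == 0%N :> nat then pairing l (col j) else col j i.-1.
have detZ_lhs : \det Z = pairing l d * bdet x y.
  rewrite (expand_det_row _ ord0) (bigD1 ord0) //= big1 => [|j j0]; rewrite mxE /=.
    rewrite addr0 /cofactor /= expr0 mul1r; congr (_ * \det _).
    by apply/matrixP => a b; rewrite !mxE.
  case: j j0 => -[|[|[|j]]] jk //= _; rewrite ?lx ?ly ?lM ?mul0r //; lia.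
have cofactor_row r : \sum_j Z (lift ord0 r) j * cofactor Z ord0 j = 0.
  have := congr1 (fun A : 'M[R]_k.+3 => A (lift ord0 r) ord0) (mul_mx_adj Z).
  rewrite !mxE /= mulr0n => adj_r; rewrite -[RHS]adj_r; apply: eq_bigr => j _.
  by rewrite [\adj Z _ _]mxE.
rewrite -detZ_lhs (expand_det_row _ ord0).
transitivity (\sum_j \sum_(r < k.+2) l r * (Z (lift ord0 r) j * cofactor Z ord0 j)).
  apply: eq_bigr => j _; rewrite mxE /= /pairing big_distrl /=; apply: eq_bigr => r _.
  by rewrite mxE /= mulrA.
by rewrite exchange_big big1 // => r _; rewrite -big_distrr /= cofactor_row mulr0.
Qed.

Lemma plucker a b c d :
  bdet a b * bdet c d - bdet a c * bdet b d + bdet a d * bdet b c = 0.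
Proof.
(* Q is a linear form vanishing on a, b, c and on the columns of M, so by
   [bdet_kernel] Q d kills [bdet a b], [bdet a c] and [bdet b c]; expanding one
   factor of (Q d)^2 shows that it is a combination of these products. *)
pose Q x := bdet a b * bdet c x - bdet a c * bdet b x + bdet a x * bdet b c.
pose cof u r := cofactor (bordered u (fun=> 0)) (inord r) col1.
pose l r := bdet a b * cof c r - bdet a c * cof b r + bdet b c * cof a r.
have QE x : Q x = pairing l x.
  rewrite /Q (bdet_expand c x) (bdet_expand b x) (bdet_expand a x) /pairing.
  rewrite /l /cof; move: (bdet a b) (bdet a c) (bdet b c) => A B C.
  rewrite big_distrl !big_distrr -sumrB -big_split /=.
  by apply: eq_bigr => r _; ring.
have lM j : (j < k)%N -> pairing l (M^~ j) = 0.
  by move=> jk; rewrite -QE /Q !bdet_col //; ring.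
have Qd_bdet u v : Q u = 0 -> Q v = 0 -> Q d * bdet u v = 0.
  by rewrite !QE => lu lv; apply: bdet_kernel.
have Qa : Q a = 0 by rewrite /Q (bdetC c a) (bdetC b a) bdet_xx; ring.
have Qb : Q b = 0 by rewrite /Q (bdetC c b) bdet_xx; ring.
have Qc : Q c = 0 by rewrite /Q bdet_xx; ring.
have : Q d * Q d = 0.
  transitivity (bdet c d * (Q d * bdet a b) - bdet b d * (Q d * bdet a c)
                + bdet a d * (Q d * bdet b c)); first by rewrite {1}/Q; ring.
  by rewrite !Qd_bdet //; ring.
by move/eqP; rewrite mulf_eq0 orbb => /eqP.
Qed.

End Plucker.

Lemma coef_pS n j : (pS n)`_j =
  if (j <= n)%N && ~~ odd (n - j) then ((6 ^ (n - j)./2 * (n - j)./2`! * j`!)%:R)^-1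
  else 0.
Proof.
rewrite /pS coef_sum.
have half_le (a : nat) : (2 * a./2 <= a)%N by have := odd_double_half a; lia.
have k_le (k : 'I_n./2.+1) : (2 * k <= n)%N by have := ltn_ord k; have := half_le n; lia.
under eq_bigr => k _ do rewrite coefZ coefXn.
case: ifP => [/andP [jn even_nj] | not_exponent].
  have e2 : (2 * (n - j)./2 = n - j)%N.
    by have := odd_double_half (n - j); rewrite (negbTE even_nj); lia.
  have lt_k : ((n - j)./2 < n./2.+1)%N by rewrite ltnS half_leq ?leq_subr.
  rewrite (bigD1 (Ordinal lt_k)) //= big1 => [|k /eqP neq_k].
    by rewrite (_ : n - 2 * (n - j)./2 = j)%N ?eqxx ?mulr1 ?addr0 //; lia.
  case: eqP => [E|]; last by rewrite mulr0.
  by exfalso; apply: neq_k; apply: val_inj => /=; have := k_le k; lia.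
rewrite big1 // => k _; case: eqP => [E|]; last by rewrite mulr0.
have := k_le k => kn; move: not_exponent.
by rewrite (_ : n - j = 2 * k)%N ?oddM ?andbT => [/negbT|]; lia.
Qed.

Lemma deriv_pS n : (pS n.+1)^`() = pS n.
Proof.
apply/polyP => i; rewrite coef_deriv !coef_pS ltnS subSS.
case: ifP => _; last by rewrite mul0rn.
rewrite factS mulnA [(_ * i.+1)%N]mulnC -mulnA natrM invfM -mulrnAl -mulr_natr.
by rewrite mulVf ?mul1r // pnatr_eq0.
Qed.

Lemma coef0_pS n : (pS n)`_0 = (3 * n.+2)%:R * (pS n.+2)`_0.
Proof.
rewrite !coef_pS !subn0 /= negbK fact0 !muln1.
case: ifP => [even_n | _]; last by rewrite mulr0.
have -> : (3 * n.+2 = 6 * n./2.+1)%N.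
  by have := odd_double_half n; rewrite (negbTE even_n); lia.
by rewrite expnS factS mulnACA (natrM _ (6 * _)) invfM mulVKf ?pnatr_eq0 // natrM invfM.
Qed.

Lemma pS0 : pS 0 = 1.
Proof. by apply/polyP => -[|i]; rewrite coef_pS coef1 //= invr1. Qed.

Lemma deriv_pZ k : (pZ k)^`() = pZ (k - 1).
Proof.
case: k => [[|n]|n].
- by rewrite [pZ 0]/= pS0 -polyC1 derivC.
- by rewrite (_ : n.+1%:Z - 1 = n)%R ?deriv_pS //; lia.
- by rewrite deriv0 (_ : Negz n - 1 = Negz n.+1)%R //; lia.
Qed.

Lemma pZ_neg k : k < 0 -> pZ k = 0.
Proof. by case: k. Qed.

Lemma pZ_rec k : pZ (k - 2) = 3%:R * (k%:~R * pZ k - 'X * pZ (k - 1)).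
Proof.
(* The defect q k satisfies (q k)' = q (k - 1), vanishes at x = 0, and vanishes
   for k < 0; induction on k then gives q k = 0. *)
pose q k := pZ (k - 2) - (3 * k)%:~R *: pZ k + 3%:R *: ('X * pZ (k - 1)).
have dq l : (q l)^`() = q (l - 1).
  have e1 : l - 1 - 1 = l - 2 by lia.
  have e2 : l - 2 - 1 = l - 1 - 2 by lia.
  rewrite /q !derivE !deriv_pZ e1 e2 !intrM intrB -!mul_polyC !rmorphM !rmorphB /=.
  by ring.
have q0 l : (q l)`_0 = 0.
  rewrite /q coefD coefB !coefZ coefXM mulr0 addr0.
  case: l => [[|[|n]]|n].
  - by rewrite pZ_neg // coef0 mulr0 mulr0z mul0r subr0.
  - by rewrite pZ_neg // coef0 [pZ 1]/= coef_pS /= mulr0 subr0.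
  - rewrite (_ : n.+2%:Z - 2 = n)%R; last by lia.
    by rewrite [pZ _]/= coef0_pS -PoszM pmulrn subrr.
  - by rewrite !pZ_neg // coef0 mulr0 subr0.
have qn n : q (n%:Z - 1) = 0.
  elim: n => [|n IH]; first by rewrite /q !pZ_neg // mulr0 !scaler0 subr0 addr0.
  apply: deriv_eq0_coef0 (q0 _); rewrite dq (_ : n.+1%:Z - 1 - 1 = n%:Z - 1)%R //; lia.
have qk : q k = 0.
  case: k => n; last by rewrite /q !pZ_neg // mulr0 !scaler0 subr0 addr0.
  by have := qn n.+1; rewrite (_ : n.+1%:Z - 1 = n)%R //; lia.
apply/eqP; rewrite -subr_eq0 -qk /q intrM -!mul_polyC !rmorphM /=.
by apply/eqP; ring.
Qed.

Definition pmx N (c : nat -> int) (r : nat -> nat) : 'M[{poly rat}]_N :=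
  \matrix_(i, j) pZ (c j - (r i)%:Z).

Definition pdet N c r := \det (pmx N c r).

Definition update (r : nat -> nat) (i v : nat) : nat -> nat :=
  fun t => if t == i then v else r t.

Lemma eq_pdet N c r r' : (forall t, (t < N)%N -> r t = r' t) -> pdet N c r = pdet N c r'.
Proof.
by move=> rr'; congr (\det _); apply/matrixP => i j; rewrite !mxE rr'.
Qed.

Lemma pdet_eq0 N c r (a b : nat) :
  (a < N)%N -> (b < N)%N -> a != b -> r a = r b -> pdet N c r = 0.
Proof.
move=> aN bN ab rab; apply: (determinant_alternate (i1 := Ordinal aN) (i2 := Ordinal bN)) => //.
by move=> j; rewrite !mxE /= rab.
Qed.

Lemma pdet_tperm N c (r r' : nat -> nat) (i1 i2 : 'I_N) : i1 != i2 ->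
  (forall k : 'I_N, r' k = r (tperm i1 i2 k)) -> pdet N c r' = - pdet N c r.
Proof.
move=> i12 r'E; rewrite /pdet.
have -> : pmx N c r' = xrow i1 i2 (pmx N c r) by apply/matrixP => k j; rewrite !mxE r'E.
by rewrite xrowE det_mulmx det_perm odd_tperm i12 expr1 mulN1r.
Qed.

Lemma deriv_pdet N c r : (pdet N c r)^`() = \sum_(i < N) pdet N c (update r i (r i).+1).
Proof.
rewrite /pdet deriv_det; apply: eq_bigr => i _; congr (\det _).
apply/matrixP => k j; rewrite !mxE /update.
case: (k =P i) => [->|/eqP ki]; first by rewrite eqxx !mxE deriv_pZ; congr pZ; lia.
by rewrite ifN // mxE.
Qed.

Lemma sum_pdet_shift2 N c r :
  \sum_(i < N) pdet N c (update r i (r i).+2) =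
  (3 * (\sum_(j < N) c j - \sum_(k < N) (r k)%:Z))%:~R * pdet N c r
  - 3%:R * ('X * (pdet N c r)^`()).
Proof.
(* By [pZ_rec], raising row i by two replaces it by the row rescaled entrywise by
   3 (c_j - r_i) minus 3x times its derivative. *)
pose a j : {poly rat} := (3 * c j)%:~R.
pose b k : {poly rat} := (- (3 * (r k)%:Z))%:~R.
pose W := pmx N c r.
have shift2 (i : 'I_N) : pdet N c (update r i (r i).+2) =
    \det (row_subst W (1 *: \matrix_(k, j) ((a j + b k) * W k j)
                       + (- (3%:R * 'X)) *: map_mx deriv W) i).
  congr (\det _); apply/matrixP => k j; rewrite !mxE /update.
  case: (k =P i) => [->|/eqP ki]; last by rewrite ifN // mxE.
  rewrite eqxx !mxE deriv_pZ (_ : c j - (r i).+2%:Z = c j - (r i)%:Z - 2); last by lia.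
  by rewrite pZ_rec /a /b -!intrD intrB -mulrzl; ring.
have sum_ab : \sum_(j < N) a j + \sum_(k < N) b k =
    (3 * (\sum_(j < N) c j - \sum_(k < N) (r k)%:Z))%:~R.
  by rewrite mulrBr big_distrr [X in _ - X]big_distrr -sumrN intrD !rmorph_sum.
under eq_bigr => i _ do rewrite shift2 det_row_subst_lin mul1r.
rewrite big_split /= sum_det_row_scale sum_ab -big_distrr /= -deriv_det.
by rewrite mulNr mulrA.
Qed.

Ltac solve_rows :=
  rewrite /update /bump /=; repeat (case: leqP => ?); repeat (case: eqP => ?); lia.

Lemma deriv_pdet_id N c : (pdet N.+1 c id)^`() = pdet N.+1 c (update id N N.+1).
Proof.
rewrite deriv_pdet big_ord_recr /= big1 ?add0r; first by apply: eq_pdet => t _; solve_rows.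
move=> i _; have := ltn_ord i => iN.
by apply: (@pdet_eq0 _ _ _ i i.+1); solve_rows.
Qed.

Lemma deriv_raised_pdetD N c :
  (pdet N.+1 c (update id N N.+1))^`() + \sum_(i < N.+1) pdet N.+1 c (update id i i.+2) =
  2%:R * pdet N.+1 c (update id N N.+2).
Proof.
rewrite deriv_pdet -big_split big_ord_recr /= big1 ?add0r => [|i _].
  by rewrite mulr_natl mulr2n; congr (_ + _); apply: eq_pdet => t _; solve_rows.
have := ltn_ord i => iN; case: (ltnP i.+1 N) => iN'.
  by rewrite (@pdet_eq0 _ _ _ i i.+1) ?(@pdet_eq0 _ _ (update id i i.+2) i i.+2) ?addr0 //;
    solve_rows.
have ordiN : widen_ord (leqnSn N) i != ord_max by rewrite -(inj_eq val_inj) /=; lia.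
rewrite (pdet_tperm c (r := update id i i.+2) ordiN) ?addNr // => k.
by case: tpermP => [->|->|/eqP + /eqP]; rewrite -?(inj_eq val_inj) /=; solve_rows.
Qed.

Lemma deriv_raised_pdetB N c :
  (pdet N.+2 c (update id N.+1 N.+2))^`() - \sum_(i < N.+2) pdet N.+2 c (update id i i.+2) =
  2%:R * pdet N.+2 c (update (update id N.+1 N.+2) N N.+1).
Proof.
rewrite deriv_pdet -sumrB big_ord_recr /=.
rewrite (@eq_pdet _ _ (update _ N.+1 _) (update id N.+1 N.+3)) ?subrr ?addr0;
  last by move=> t _; solve_rows.
rewrite big_ord_recr /= big1 ?add0r => [|i _].
  have NN1 : inord N != inord N.+1 :> 'I_N.+2.
    by apply/eqP => /(congr1 val); rewrite /= !inordK; lia.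
  rewrite (pdet_tperm c (r' := update id N N.+2) (r := update (update id N.+1 N.+2) N N.+1) NN1)
    => [|k].
    by rewrite opprK mulr_natl mulr2n; congr (_ + _); apply: eq_pdet => t _; solve_rows.
  by case: tpermP => [->|->|/eqP + /eqP]; rewrite -?(inj_eq val_inj) /= ?inordK //; solve_rows.
have := ltn_ord i => iN.
by rewrite (@pdet_eq0 _ _ _ i i.+1) ?(@pdet_eq0 _ _ (update id i i.+2) i i.+2) ?subr0 //;
  solve_rows.
Qed.

Definition unit_vec (p : nat) : nat -> {poly rat} := fun i => (i == p)%:R.
Definition pcol (d : int) : nat -> {poly rat} := fun i => pZ (d - i%:Z).
Definition ccons (d : int) (c : nat -> int) : nat -> int :=
  fun j => if j is j'.+1 then c j' else d.

Lemma bdet_units N c p q : (p < q < N.+2)%N ->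
  bdet N (fun i j => pZ (c j - i%:Z)) (unit_vec p) (unit_vec q) =
  (-1) ^+ (p + q.-1) * pdet N c (fun t => bump p (bump q.-1 t)).
Proof.
move=> /andP [pq qN]; have pN : (p < N.+2)%N by lia.
have q'N : (q.-1 < N.+1)%N by lia.
rewrite /bdet (@expand_det_unit_col _ _ _ ord0 (Ordinal pN)); last by move=> i; rewrite !mxE.
rewrite (@expand_det_unit_col _ _ _ ord0 (Ordinal q'N)) => [|i]; last first.
  rewrite !mxE /= /unit_vec; congr ((nat_of_bool _)%:R).
  by apply/eqP/eqP => [bq | ->]; [apply: val_inj; move: bq |]; solve_rows.
rewrite /= !addn0 exprD -mulrA; congr (_ * (_ * \det _)).
by apply/matrixP => i j; rewrite !mxE /= !subSS subn0.
Qed.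

Lemma bdet_pcol_unit N c d q : (q < N.+2)%N ->
  bdet N (fun i j => pZ (c j - i%:Z)) (pcol d) (unit_vec q) =
  (-1) ^+ q.+1 * pdet N.+1 (ccons d c) (bump q).
Proof.
move=> qN; have col1 : (1 < N.+2)%N by [].
rewrite /bdet (@expand_det_unit_col _ _ _ (Ordinal col1) (Ordinal qN)) => [|i];
  last by rewrite !mxE.
rewrite /= addn1; congr (_ * \det _); apply/matrixP => i j; rewrite !mxE /=.
by case: j => -[|j] jN //=; rewrite !subSS subn0.
Qed.

Lemma plucker_pdet n c d :
  pdet n.+1 c id * pdet n.+2 (ccons d c) (update (update id n.+1 n.+2) n n.+1)
  - pdet n.+1 c (update id n n.+1) * pdet n.+2 (ccons d c) (update id n.+1 n.+2)
  + pdet n.+1 c (update id n n.+2) * pdet n.+2 (ccons d c) id = 0.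
Proof.
(* Plucker for the (n+3) x (n+1) matrix (p_(c_j - i)) bordered by p_(d - i),
   e_n, e_(n+1), e_(n+2): each bordered determinant is, up to sign, the minor
   deleting the rows of the unit vectors. *)
have := plucker n.+1 (fun i j => pZ (c j - i%:Z))
          (pcol d) (unit_vec n) (unit_vec n.+1) (unit_vec n.+2).
rewrite !bdet_pcol_unit ?bdet_units /=; try lia.
rewrite (@eq_pdet _ _ (bump n) (update (update id n.+1 n.+2) n n.+1))
  ?(@eq_pdet _ _ (bump n.+1) (update id n.+1 n.+2)) ?(@eq_pdet _ _ (bump n.+2) id)
  ?(@eq_pdet _ _ (fun t => bump n.+1 (bump n.+1 t)) id)
  ?(@eq_pdet _ _ (fun t => bump n (bump n.+1 t)) (update id n n.+1))
  ?(@eq_pdet _ _ (fun t => bump n (bump n t)) (update id n n.+2)); try by move=> *; solve_rows.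
have sign_sq : (-1) ^+ n * (-1) ^+ n = 1 :> {poly rat}.
  by rewrite -exprD addnn -signr_odd odd_double.
rewrite !addSn !addnS !exprS !exprD sign_sq => signed.
by rewrite -[LHS]mul1r -sign_sq -(mulr0 (- (-1) ^+ n)) -signed; ring.
Qed.

Lemma hirota_pdet_ccons N c d :
  hirota (3 * (N%:Z - d)) (pdet N c id) (pdet N.+1 (ccons d c) id) = 0.
Proof.
case: N => [|n].
  rewrite /pdet det_mx00 det_mx11 !mxE /= subr0 /hirota /Dx2 /Dx !derivnS !derivn0 -polyC1 derivC.
  rewrite !deriv_pZ (_ : d - 1 - 1 = d - 2) ?pZ_rec -?mul_polyC ?rmorph_int /=; last by lia.
  by rewrite intrM intrB; ring.
set F := pdet n.+1 c id; set F1 := pdet n.+1 c (update id n n.+1).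
set F2 := pdet n.+1 c (update id n n.+2).
set G := pdet n.+2 (ccons d c) id; set G1 := pdet n.+2 (ccons d c) (update id n.+1 n.+2).
set G3 := pdet n.+2 (ccons d c) (update (update id n.+1 n.+2) n n.+1).
set wF := 3 * (\sum_(j < n.+1) c j - \sum_(k < n.+1) (k : nat)%:Z).
set wG := 3 * (\sum_(j < n.+2) ccons d c j - \sum_(k < n.+2) (k : nat)%:Z).
have dF : F^`() = F1 := deriv_pdet_id n c.
have dG : G^`() = G1 := deriv_pdet_id n.+1 (ccons d c).
have ddF : F1^`() = 2%:R * F2 - wF%:~R * F + 3%:R * ('X * F1).
  by rewrite -(deriv_raised_pdetD n c) sum_pdet_shift2 -/F -/F1 dF /wF; ring.
have ddG : G1^`() = 2%:R * G3 + wG%:~R * G - 3%:R * ('X * G1).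
  by rewrite -(deriv_raised_pdetB n (ccons d c)) sum_pdet_shift2 -/G -/G1 dG /wG; ring.
have wGE : wG = wF + 3 * (d - n.+1%:Z).
  have sum_rows : \sum_(k < n.+2) (k : nat)%:Z = \sum_(k < n.+1) (k : nat)%:Z + n.+1%:Z.
    by rewrite big_ord_recr.
  have sum_cols : \sum_(j < n.+2) ccons d c j = d + \sum_(j < n.+1) c j by rewrite big_ord_recl.
  rewrite /wG /wF sum_rows sum_cols; lia.
rewrite /hirota /Dx2 /Dx !derivnS !derivn0 dF dG ddF ddG -mul_polyC rmorph_int /= wGE.
rewrite -(mulr0 2%:R) -(plucker_pdet n c d) -/F -/F1 -/F2 -/G -/G1 -/G3 !intrD !intrM !intrB.
by ring.
Qed.

Definition shifts (n : nat) : nat -> int := fun j => (n + j)%:Z.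

Lemma h_pdet m n : h m n = pdet m (shifts n) id.
Proof. by congr (\det _); apply/matrixP => i j; rewrite !mxE; congr pZ; rewrite /shifts; lia. Qed.

Lemma h_pdet_ccons0 m n : h m n = pdet m.+1 (ccons 0 (shifts n.+1)) id.
Proof.
rewrite /pdet (@expand_det_unit_col _ _ _ ord0 ord0) => [|[[|i] im]]; last first.
- by rewrite !mxE.
- by rewrite !mxE /= pS0.
rewrite mul1r; congr (\det _); apply/matrixP => i j; rewrite !mxE /=.
by congr pZ; rewrite /shifts /bump /=; lia.
Qed.

Lemma h_succ_pdet_ccons m n : h m.+1 n = pdet m.+1 (ccons n (shifts n.+1)) id.
Proof.
congr (\det _); apply/matrixP => i j; rewrite !mxE.
by case: j => -[|j] jm /=; congr pZ; rewrite /shifts; lia.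
Qed.

Lemma h_succ_pdet_ccons_last m n :
  h m.+1 n = (-1) ^+ m *: pdet m.+1 (ccons (n + m)%:Z (shifts n)) id.
Proof.
rewrite /h /pdet (expand_det_col _ ord_max) (expand_det_col _ ord0) scaler_sumr.
apply: eq_bigr => i _; rewrite !mxE /cofactor /= -!mul_polyC.
have -> : row' i (col' ord_max (\matrix_(i0, j) pZ (n%:Z - i0%:Z + j%:Z))) =
          row' i (col' ord0 (pmx m.+1 (ccons (n + m)%:Z (shifts n)) id)).
  apply/matrixP => a b; rewrite !mxE /= /shifts.
  congr pZ; rewrite /bump; have := ltn_ord b; case: (leqP i a) => /=; lia.
rewrite (_ : n%:Z - i%:Z + m%:Z = (n + m)%:Z - i%:Z); last by lia.
by rewrite rmorph_sign addn0 exprD; ring.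
Qed.

Lemma hirotaZr k F G (a : rat) : hirota k F (a *: G) = a *: hirota k F G.
Proof.
by rewrite /hirota /Dx2 /Dx !derivnS !derivn0 !derivZ -!mul_polyC; ring.
Qed.

Theorem lemma5p7 (m n : nat) :
  [/\ hirota (3 * m%:Z) (h m n.+1) (h m n) = 0,
      hirota (3 * (m%:Z - n%:Z)) (h m n.+1) (h m.+1 n) = 0
    & hirota (- (3 * n%:Z)) (h m n) (h m.+1 n) = 0].
Proof.
split.
- by rewrite h_pdet h_pdet_ccons0 -(subr0 m%:Z) hirota_pdet_ccons.
- by rewrite h_pdet h_succ_pdet_ccons hirota_pdet_ccons.
- rewrite h_pdet h_succ_pdet_ccons_last hirotaZr.
  by rewrite (_ : - _ = 3 * (m%:Z - (n + m)%:Z)) ?hirota_pdet_ccons ?scaler0 //; lia.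
Qed.
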